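(* Consider an unreplicated completely randomized design ($N_q=1$ for all $q$, so $Q=N$) with $S(q,q)>0$ for all $q$, and a grouping $\{\langle g\rangle\}_{g=1}^G$. Then for each group, $\mathbb E\{\hat Y_{\langle g\rangle}\}=\overline Y_{\langle g\rangle}$, where $\overline Y_{\langle g\rangle}=|\langle g\rangle|^{-1}\sum_{q\in\langle g\rangle}\overline Y(q)$. If moreover Condition 5 holds, then for every $q$, with $\langle g\rangle$ the group containing $q$, $$\mathbb E\{\hat V_{\hat Y}(q,q)\}\ge S(q,q)+\Omega(q,q)+\mu_{\langle g\rangle}(\overline Y(q)-\overline Y_{\langle g\rangle})^2,$$ where $$\Omega(q,q)=\mu_{\langle g\rangle}|\langle g\rangle|^{-2}\Big(1-\frac{\varrho_{\langle g\rangle}}N-\frac{|\langle g\rangle|-1}N\Big)\sum_{q'\in\langle g\rangle,q'\neq q}S(q',q')\ \ge0.$$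
   Context: Randomization model with $N$ units and $Q$ treatment levels; unit $i$ has fixed real potential outcomes $Y_i(1),\dots,Y_i(Q)$. Unreplicated complete randomization: $N_q=1$ for all $q$ and the assignment is a uniformly random bijection between units and levels; $Y_q$ denotes the observed outcome of the unique unit assigned to level $q$. $\overline Y(q)=N^{-1}\sum_iY_i(q)$, $S(q,q')=(N-1)^{-1}\sum_i(Y_i(q)-\overline Y(q))(Y_i(q')-\overline Y(q'))$, and $S^\star(q,q')=S(q,q')/\sqrt{S(q,q)S(q',q')}$. Grouping: a fixed (data-independent) partition $[Q]=\bigcup_{g=1}^G\langle g\rangle$ into disjoint groups with $|\langle g\rangle|\ge2$. For each group, $\hat Y_{\langle g\rangle}=|\langle g\rangle|^{-1}\sum_{q\in\langle g\rangle}Y_q$, $\mu_{\langle g\rangle}=(1-2N^{-1})^{-1}(1-|\langle g\rangle|^{-1})^{-2}$, and for $q\in\langle g\rangle$, $\hat V_{\hat Y}(q,q)=\mu_{\langle g\rangle}(Y_q-\hat Y_{\langle g\rangle})^2$. $\varrho_{\langle g\rangle}$ is the largest eigenvalue of $(S^\star(q,q'))_{q,q'\in\langle g\rangle}$. Condition 5: $N-\varrho_{\langle g\rangle}-(|\langle g\rangle|-1)\ge0$ for all groups. *)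

From HB Require Import structures.
From mathcomp Require Import all_boot all_order all_algebra.
From mathcomp Require Import perm.
Set Implicit Arguments. Unset Strict Implicit. Unset Printing Implicit Defensive.
Import Order.TTheory GRing.Theory Num.Theory.
Local Open Scope ring_scope.

Section Design.
Variables (R : rcfType) (N : nat).
(* Y i q = potential outcome Y_i(q) of unit i under level q (Q = N levels). *)
Variable Y : 'I_N -> 'I_N -> R.

Definition Ybar (q : 'I_N) : R := N%:R^-1 * \sum_(i < N) Y i q.

Definition Scov (q q' : 'I_N) : R :=
  (N.-1)%:R^-1 * \sum_(i < N) (Y i q - Ybar q) * (Y i q' - Ybar q').

Definition Sstar (q q' : 'I_N) : R := Scov q q' / Num.sqrt (Scov q q * Scov q' q').

(* An assignment is a uniformly random bijection; s q is the unit assigned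
   to level q. Y_q is the observed outcome at level q. *)
Definition obs (s : {perm 'I_N}) (q : 'I_N) : R := Y (s q) q.

Definition Eperm (f : {perm 'I_N} -> R) : R :=
  #|{perm 'I_N}|%:R^-1 * \sum_(s : {perm 'I_N}) f s.

Definition Yhat_grp (A : {set 'I_N}) (s : {perm 'I_N}) : R :=
  #|A|%:R^-1 * \sum_(q in A) obs s q.

Definition Ybar_grp (A : {set 'I_N}) : R :=
  #|A|%:R^-1 * \sum_(q in A) Ybar q.

Definition mu_grp (A : {set 'I_N}) : R :=
  (1 - 2 / N%:R)^-1 * ((1 - #|A|%:R^-1) ^+ 2)^-1.

Definition Vhat (P : {set {set 'I_N}}) (s : {perm 'I_N}) (q : 'I_N) : R :=
  mu_grp (pblock P q) * (obs s q - Yhat_grp (pblock P q) s) ^+ 2.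

Definition Sstar_sub (A : {set 'I_N}) : 'M[R]_#|A| :=
  \matrix_(i, j) Sstar (@enum_val _ (mem A) i) (@enum_val _ (mem A) j).

Definition Omega (P : {set {set 'I_N}}) (rho : {set 'I_N} -> R) (q : 'I_N) : R :=
  let A := pblock P q in
  mu_grp A * (#|A|%:R ^+ 2)^-1 * (1 - rho A / N%:R - (#|A|%:R - 1) / N%:R)
  * \sum_(q' in A | q' != q) Scov q' q'.

End Design.

Definition largest_eigenvalue (R : realFieldType) (n : nat) (M : 'M[R]_n) (r : R) : Prop :=
  eigenvalue M r /\ (forall a, eigenvalue M a -> a <= r :> R) .

From HB Require Import structures.
From mathcomp Require Import all_boot all_order all_algebra.
From mathcomp Require Import perm spectral sesquilinear.
From mathcomp.real_closed Require Import complex.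
From mathcomp.algebra_tactics Require Import ring lra.
Import Order.TTheory GRing.Theory Num.Theory.
Local Open Scope ring_scope.
Set Implicit Arguments. Unset Strict Implicit. Unset Printing Implicit Defensive.

(* Write Y_q - Yhat_<g> = sum_{j in <g>} c_j Y_j with the contrast weights
   c_j = [j = q] - 1/|<g>|.  Under a uniformly random bijection the observed
   outcomes have E Y_j = Ybar(j) and
   E Y_j Y_k = Ybar(j) Ybar(k) + [j = k] S(j,k) - S(j,k)/N,
   so E (Y_q - Yhat_<g>)^2 = (sum c_j Ybar(j))^2 + sum c_j^2 S(j,j) - c'Sc/N
   exactly.  In c'Sc, the block away from q is the quadratic form of the
   correlation matrix S* at the vector (sqrt S(j,j))_{j <> q}, which Rayleigh's
   inequality bounds by rho_<g> sum_{j <> q} S(j,j); the cross terms with q are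
   controlled by the nonnegative variances of Y(q) + Y(j). *)

Section RealSymmetric.
Variables (R : rcfType) (n : nat) (M : 'M[R]_n).
Hypothesis M_sym : M^T = M.

Local Notation toC := (real_complex R).
Local Notation Mc := (map_mx toC M).

Lemma complexify_hermsym : Mc \is hermsymmx.
Proof.
apply: realsym_hermsym.
  by apply/is_hermitianmxP; rewrite expr0 scale1r map_mx_id // map_trmx M_sym.
by apply/mxOverP => i j; rewrite mxE complex_real.
Qed.

Lemma spectral_diag_le (r : R) :
  (forall a, eigenvalue M a -> a <= r) -> forall i, spectral_diag Mc 0 i <= toC r.
Proof.
move=> le_r i; set D := spectral_diag Mc.
have /complex_realP [a Da] : D 0 i \is Num.real.
  exact: mxOverP (hermitian_spectral_diag_real complexify_hermsym) 0 i.
have D_eig : eigenvalue Mc (D 0 i).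
  have /orthomx_spectralP McE := hermitian_normalmx complexify_hermsym.
  set P := spectralmx Mc in McE.
  have P_unit : P \in unitmx := spectral_unit Mc.
  apply/eigenvalueP; exists (row i P).
    rewrite -row_mul [X in _ *m X]McE !mulmxA mulmxV // mul1mx mul_diag_mx.
    by apply/rowP => j; rewrite !mxE.
  rewrite rowE mulmx_free_eq0 ?row_free_unit //.
  by apply/eqP => /matrixP /(_ 0 i); rewrite !mxE !eqxx => /eqP; rewrite oner_eq0.
rewrite Da lecR; apply: le_r; rewrite -(eigenvalue_map toC).
by move: D_eig; rewrite Da.
Qed.

(* In an orthonormal eigenbasis of the complexified matrix the quadratic form
   is a combination of eigenvalues with weights summing to the squared norm. *)
Lemma quad_form_le_eigenvalue_bound (r : R) :
  (forall a, eigenvalue M a -> a <= r) ->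
  forall v : 'rV[R]_n, (v *m M *m v^T) 0 0 <= r * (v *m v^T) 0 0.
Proof.
move=> le_r v.
have /orthomx_spectralP McE := hermitian_normalmx complexify_hermsym.
set P := spectralmx Mc in McE; set D := spectral_diag Mc in McE.
have P_unitary : P \is unitarymx := spectral_unitarymx Mc.
have PtP : (P ^t* )%sesqui *m P = 1%:M.
  by rewrite -invmx_unitary // mulVmx // spectral_unit.
pose vc := map_mx toC v; pose w := P *m vc^T.
have vcPt : vc *m (P ^t* )%sesqui = (w ^t* )%sesqui.
  rewrite /w trmx_mul trmxK map_mxM; congr (_ *m _).
  rewrite -map_mx_comp; apply/matrixP => i j; rewrite !mxE /=.
  by rewrite conj_Creal // complex_real.
have quadE : toC ((v *m M *m v^T) 0 0) = ((w ^t* )%sesqui *m diag_mx D *m w) 0 0.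
  have -> : toC ((v *m M *m v^T) 0 0) = (vc *m Mc *m vc^T) 0 0.
    by rewrite /vc map_trmx -!map_mxM [RHS]mxE.
  by rewrite McE invmx_unitary // /w -vcPt !mulmxA.
have normE : toC ((v *m v^T) 0 0) = ((w ^t* )%sesqui *m w) 0 0.
  have -> : toC ((v *m v^T) 0 0) = (vc *m vc^T) 0 0.
    by rewrite /vc map_trmx -!map_mxM [RHS]mxE.
  by rewrite /w -vcPt !mulmxA -(mulmxA vc) PtP mulmx1.
rewrite -lecR rmorphM /= quadE normE !mxE mulr_sumr; apply: ler_sum => j _.
rewrite mul_mx_diag !mxE (mulrC _ (D 0 j)) -mulrA ler_wpM2r ?spectral_diag_le //.
by rewrite mulrC mul_conjC_ge0.
Qed.

End RealSymmetric.

Section PermSums.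
Variables (T : finType) (V : nmodType).

Lemma sum_perm_mulg (t : {perm T}) (F : {perm T} -> V) :
  \sum_s F (t * s)%g = \sum_s F s.
Proof. by rewrite [RHS](reindex_inj (mulgI t)). Qed.

Lemma perm_map2 (a b c d : T) : a != b -> c != d ->
  exists t : {perm T}, t c = a /\ t d = b.
Proof.
move=> neq_ab neq_cd; pose e := tperm c a d.
have neq_ea : e != a.
  by rewrite /e -{2}(tpermL c a) (inj_eq perm_inj) eq_sym.
exists (tperm c a * tperm e b)%g; rewrite !permM tpermL -/e.
by rewrite tpermL tpermD // eq_sym.
Qed.

Lemma sum_perm_app (x y : T) (F : T -> V) :
  \sum_(s : {perm T}) F (s x) = \sum_(s : {perm T}) F (s y).
Proof.
rewrite -(sum_perm_mulg (tperm x y) (fun s => F (s y))).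
by apply: eq_bigr => s _; rewrite permM tpermR.
Qed.

Lemma sum_perm_app2 (x x' y y' : T) (G : T -> T -> V) : x != x' -> y != y' ->
  \sum_(s : {perm T}) G (s x) (s x') = \sum_(s : {perm T}) G (s y) (s y').
Proof.
move=> neq_x neq_y; have [t [ty ty']] := perm_map2 neq_x neq_y.
rewrite -(sum_perm_mulg t (fun s => G (s y) (s y'))).
by apply: eq_bigr => s _; rewrite !permM ty ty'.
Qed.

Lemma sum_perm_appE (x : T) (F : T -> V) :
  (\sum_(s : {perm T}) F (s x)) *+ #|T| = (\sum_i F i) *+ #|{perm T}|.
Proof.
rewrite -sumr_const (eq_bigr _ (fun y _ => sum_perm_app x y F)) exchange_big /=.
rewrite -sumr_const; apply: eq_bigr => s _.
by rewrite [RHS](reindex_inj (@perm_inj _ s)).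
Qed.

Lemma sum_perm_app2E (x x' : T) (G : T -> T -> V) : x != x' ->
  (\sum_(s : {perm T}) G (s x) (s x')) *+ (#|T| * #|T|.-1) =
  (\sum_i \sum_(j | j != i) G i j) *+ #|{perm T}|.
Proof.
move=> neq_x.
have -> : (\sum_(s : {perm T}) G (s x) (s x')) *+ (#|T| * #|T|.-1) =
    \sum_y \sum_(y' | y' != y) \sum_(s : {perm T}) G (s y) (s y').
  rewrite mulnC mulrnA -sumr_const; apply: eq_bigr => y _.
  rewrite -(cardC1 y) -sumr_const; apply: eq_bigr => y' neq_y'.
  by apply: sum_perm_app2; rewrite // eq_sym.
under eq_bigr do rewrite exchange_big /=.
rewrite exchange_big -sumr_const; apply: eq_bigr => s _ /=.
rewrite [RHS](reindex_inj (@perm_inj _ s)); apply: eq_bigr => y _.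
rewrite [RHS](reindex_inj (@perm_inj _ s)) /=.
by apply: eq_bigl => y'; rewrite (inj_eq perm_inj).
Qed.

End PermSums.

Section Moments.
Variables (R : rcfType) (N : nat) (Y : 'I_N -> 'I_N -> R).

Lemma card_perm_neq0 : #|{perm 'I_N}|%:R != 0 :> R.
Proof. by rewrite pnatr_eq0 -lt0n; apply/card_gt0P; exists 1%g. Qed.

Lemma eq_Eperm (f g : {perm 'I_N} -> R) : f =1 g -> Eperm f = Eperm g.
Proof. by move=> fg; rewrite /Eperm (eq_bigr _ (fun s _ => fg s)). Qed.

Lemma EpermZ (c : R) (f : {perm 'I_N} -> R) :
  Eperm (fun s => c * f s) = c * Eperm f.
Proof. by rewrite /Eperm -mulr_sumr mulrCA. Qed.

Lemma Eperm_sum (I : finType) (A : pred I) (F : I -> {perm 'I_N} -> R) :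
  Eperm (fun s => \sum_(j in A) F j s) = \sum_(j in A) Eperm (F j).
Proof. by rewrite /Eperm exchange_big mulr_sumr. Qed.

Lemma Eperm_app (x : 'I_N) (F : 'I_N -> R) :
  Eperm (fun s => F (s x)) = N%:R^-1 * \sum_(i < N) F i.
Proof.
(* [\sum_(i < N)] and [\sum_(i : 'I_N)] are convertible but differ
   syntactically, which [field] cannot see through. *)
suff -> : Eperm (fun s => F (s x)) = N%:R^-1 * \sum_i F i by [].
have N_gt0 : (0 < N)%N by apply: leq_ltn_trans (ltn_ord x).
have N_neq0 : N%:R != 0 :> R by rewrite pnatr_eq0 -lt0n.
have := sum_perm_appE x F; rewrite card_ord -[LHS]mulr_natr -[RHS]mulr_natr => sumE.
rewrite /Eperm -[X in _ * X](mulfK N_neq0) sumE.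
by field; rewrite N_neq0 card_perm_neq0.
Qed.

Lemma Eperm_app2 (x x' : 'I_N) (G : 'I_N -> 'I_N -> R) : x != x' ->
  Eperm (fun s => G (s x) (s x')) =
  (N%:R * (N%:R - 1))^-1 * \sum_(i < N) \sum_(j < N | j != i) G i j.
Proof.
move=> neq_x; suff -> : Eperm (fun s => G (s x) (s x')) =
  (N%:R * (N%:R - 1))^-1 * \sum_i \sum_(j | j != i) G i j by [].
have := max_card (mem [set x; x']); rewrite cards2 neq_x card_ord => N_gt1.
have N_neq0 : N%:R != 0 :> R by rewrite pnatr_eq0 -lt0n ltnW.
have N1_neq0 : N%:R - 1 != 0 :> R by rewrite subr_eq0 pnatr_eq1 gtn_eqF.
have := sum_perm_app2E G neq_x; rewrite card_ord -subn1.
rewrite -[LHS]mulr_natr -[RHS]mulr_natr natrM natrB; last exact: ltnW.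
move=> sumE.
rewrite /Eperm -[X in _ * X](mulfK (mulf_neq0 N_neq0 N1_neq0)) sumE.
by field; rewrite N_neq0 N1_neq0 card_perm_neq0.
Qed.

Lemma Scov_sym j k : Scov Y j k = Scov Y k j.
Proof. by rewrite /Scov; under eq_bigr do rewrite mulrC. Qed.

Lemma Scov_add_ge0 j k : 0 <= Scov Y j j + 2 * Scov Y j k + Scov Y k k.
Proof.
pose d i l := Y i l - Ybar Y l.
have sum_sqrE : \sum_(i < N) (d i j + d i k) ^+ 2 = \sum_(i < N) d i j * d i j
    + 2 * \sum_(i < N) d i j * d i k + \sum_(i < N) d i k * d i k.
  by rewrite mulr_sumr -!big_split /=; apply: eq_bigr => i _; ring.
have -> : Scov Y j j + 2 * Scov Y j k + Scov Y k k =
    (N.-1)%:R^-1 * \sum_(i < N) (d i j + d i k) ^+ 2.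
  by rewrite sum_sqrE /Scov /d; ring.
by rewrite mulr_ge0 ?invr_ge0 ?ler0n ?sumr_ge0 // => i _; apply: sqr_ge0.
Qed.

Lemma ScovE j k : Scov Y j k =
  (N%:R - 1)^-1 * (\sum_(i < N) Y i j * Y i k
                   - N%:R^-1 * (\sum_(i < N) Y i j) * \sum_(i < N) Y i k).
Proof.
have N_gt0 : (0 < N)%N by apply: leq_ltn_trans (ltn_ord j).
have N_neq0 : N%:R != 0 :> R by rewrite pnatr_eq0 -lt0n.
rewrite /Scov /Ybar -subn1 natrB // -mulr_natl; congr (_ * _).
under eq_bigr do rewrite mulrBl !mulrBr.
rewrite !sumrB -!mulr_suml -!mulr_sumr sumr_const card_ord -mulr_natl.
by field.
Qed.

Lemma Eperm_obs q : Eperm (fun s => obs Y s q) = Ybar Y q.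
Proof. exact: Eperm_app. Qed.

Hypothesis N_gt1 : (1 < N)%N.

Lemma Eperm_obsM j k : Eperm (fun s => obs Y s j * obs Y s k) =
  Ybar Y j * Ybar Y k + (j == k)%:R * Scov Y j k - Scov Y j k / N%:R.
Proof.
have N_neq0 : N%:R != 0 :> R by rewrite pnatr_eq0 -lt0n ltnW.
have N1_neq0 : N%:R - 1 != 0 :> R by rewrite subr_eq0 pnatr_eq1 gtn_eqF.
rewrite ScovE /Ybar /obs; have [<-|neq_jk] := eqVneq j k.
  by rewrite (Eperm_app j (fun i => Y i j * Y i j)) mul1r; field; rewrite N_neq0 N1_neq0.
rewrite (Eperm_app2 (fun i l => Y i j * Y l k) neq_jk) mul0r addr0.
have -> : \sum_(i < N) \sum_(l < N | l != i) Y i j * Y l k =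
    (\sum_(i < N) Y i j) * (\sum_(i < N) Y i k) - \sum_(i < N) Y i j * Y i k.
  rewrite mulr_suml -sumrB; apply: eq_bigr => i _.
  by rewrite mulr_sumr [X in _ = X - _](bigD1 i) //= addrC addrK.
by field; rewrite N_neq0 N1_neq0.
Qed.

Lemma Eperm_lin_sqr (A : {set 'I_N}) (c : 'I_N -> R) :
  Eperm (fun s => (\sum_(j in A) c j * obs Y s j) ^+ 2) =
  (\sum_(j in A) c j * Ybar Y j) ^+ 2 + \sum_(j in A) c j ^+ 2 * Scov Y j j
  - (\sum_(j in A) \sum_(k in A) c j * c k * Scov Y j k) / N%:R.
Proof.
have sqr_sum (x : 'I_N -> R) : (\sum_(j in A) c j * x j) ^+ 2 =
    \sum_(j in A) \sum_(k in A) c j * c k * (x j * x k).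
  rewrite expr2 mulr_suml; apply: eq_bigr => j _.
  by rewrite mulr_sumr; apply: eq_bigr => k _; ring.
rewrite (eq_Eperm (g := fun s => \sum_(j in A) \sum_(k in A)
                            c j * c k * (obs Y s j * obs Y s k))) => [|s]; last first.
  exact: sqr_sum.
rewrite Eperm_sum sqr_sum mulr_suml -big_split -sumrB /=.
apply: eq_bigr => j jA; rewrite Eperm_sum mulr_suml !(bigD1 j jA) /=.
rewrite (eq_bigr (fun k => c j * c k * (Ybar Y j * Ybar Y k)
                           - c j * c k * Scov Y j k / N%:R)) => [|k /andP [_ neq_kj]].
  by rewrite sumrB EpermZ Eperm_obsM eqxx mul1r; ring.
by rewrite EpermZ Eperm_obsM eq_sym (negbTE neq_kj) mul0r addr0; ring.
Qed.

End Moments.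

Section EnumForms.
Variables (R : comNzRingType) (T : finType) (A : {set T}) (x : T -> R).

Local Notation v := (\row_(i < #|A|) x (enum_val i)).

Lemma enum_quad_form (F : T -> T -> R) :
  (v *m (\matrix_(i, j) F (enum_val i) (enum_val j)) *m v^T) 0 0 =
  \sum_(j in A) \sum_(k in A) x j * F j k * x k.
Proof.
rewrite exchange_big big_enum_val !mxE; apply: eq_bigr => l _.
rewrite big_enum_val !mxE mulr_suml; apply: eq_bigr => i _.
by rewrite !mxE.
Qed.

Lemma enum_norm_form : (v *m v^T) 0 0 = \sum_(j in A) x j ^+ 2.
Proof. by rewrite big_enum_val mxE; apply: eq_bigr => i _; rewrite !mxE expr2. Qed.

End EnumForms.

Section Contrast.
Variables (R : rcfType) (N : nat) (Y : 'I_N -> 'I_N -> R).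
Variables (A : {set 'I_N}) (q : 'I_N).
Hypothesis qA : q \in A.

Local Notation m := (#|A|%:R : R).

Definition contrast (j : 'I_N) : R := (j == q)%:R - m^-1.

Definition Srest_diag : R := \sum_(j in A | j != q) Scov Y j j.
Definition Srest_row : R := \sum_(k in A | k != q) Scov Y q k.
Definition Srest_all : R := \sum_(j in A | j != q) \sum_(k in A | k != q) Scov Y j k.

Lemma sum_contrast_split (x : 'I_N -> R) :
  \sum_(j in A) contrast j * x j = (1 - m^-1) * x q - m^-1 * \sum_(j in A | j != q) x j.
Proof.
rewrite (bigD1 q qA) /= /contrast eqxx mulr_sumr -sumrN; congr (_ + _).
by apply: eq_bigr => j /andP [_ /negbTE ->]; rewrite sub0r mulNr.
Qed.

Lemma sum_contrast (x : 'I_N -> R) :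
  \sum_(j in A) contrast j * x j = x q - m^-1 * \sum_(j in A) x j.
Proof. by rewrite sum_contrast_split (bigD1 q qA) /=; ring. Qed.

Lemma sum_contrast_sqr_Scov :
  \sum_(j in A) contrast j ^+ 2 * Scov Y j j =
  (1 - m^-1) ^+ 2 * Scov Y q q + Srest_diag / m ^+ 2.
Proof.
rewrite (bigD1 q qA) /= /contrast eqxx /Srest_diag mulr_suml; congr (_ + _).
by apply: eq_bigr => j /andP [_ /negbTE ->]; rewrite sub0r sqrrN exprVn mulrC.
Qed.

Lemma sum_contrast2_Scov :
  \sum_(j in A) \sum_(k in A) contrast j * contrast k * Scov Y j k =
  (1 - m^-1) ^+ 2 * Scov Y q q - 2 * (1 - m^-1) * m^-1 * Srest_row + Srest_all / m ^+ 2.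
Proof.
have m_neq0 : m != 0 by rewrite pnatr_eq0 -lt0n; apply/card_gt0P; exists q.
have rowsE : \sum_(j in A | j != q)
    ((1 - m^-1) * Scov Y j q - m^-1 * \sum_(k in A | k != q) Scov Y j k) =
    (1 - m^-1) * Srest_row - m^-1 * Srest_all.
  rewrite sumrB /Srest_row /Srest_all !mulr_sumr; congr (_ - _).
  by apply: eq_bigr => j _; rewrite Scov_sym.
under eq_bigr do under eq_bigr do rewrite -mulrA.
under eq_bigr do rewrite -mulr_sumr sum_contrast_split.
by rewrite sum_contrast_split rowsE -/Srest_row; field.
Qed.

Lemma Srest_cross_ge0 : 0 <= (m - 1) * Scov Y q q + 2 * Srest_row + Srest_diag.
Proof.
have countE : \sum_(k in A | k != q) 1 = m - 1 :> R.
  have : \sum_(k in A) 1 = m by rewrite sumr_const.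
  by rewrite (bigD1 q qA) /= => <-; rewrite addrC addrK.
have : 0 <= \sum_(k in A | k != q) (Scov Y q q + 2 * Scov Y q k + Scov Y k k).
  by apply: sumr_ge0 => k _; apply: Scov_add_ge0.
have constE : \sum_(k in A | k != q) Scov Y q q = (m - 1) * Scov Y q q.
  by rewrite -countE mulr_suml; apply: eq_bigr => k _; rewrite mul1r.
have rowE : \sum_(k in A | k != q) 2 * Scov Y q k = 2 * Srest_row.
  by rewrite /Srest_row mulr_sumr.
by rewrite !big_split /= constE rowE.
Qed.

Lemma Eperm_contrast_sqr : (1 < N)%N ->
  Eperm (fun s => (obs Y s q - Yhat_grp Y A s) ^+ 2) =
  (Ybar Y q - Ybar_grp Y A) ^+ 2 + ((1 - m^-1) ^+ 2 * Scov Y q q + Srest_diag / m ^+ 2)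
  - ((1 - m^-1) ^+ 2 * Scov Y q q - 2 * (1 - m^-1) * m^-1 * Srest_row
     + Srest_all / m ^+ 2) / N%:R.
Proof.
move=> N_gt1; rewrite /Ybar_grp -sum_contrast.
rewrite (eq_Eperm (g := fun s => (\sum_(j in A) contrast j * obs Y s j) ^+ 2)).
  by rewrite Eperm_lin_sqr // sum_contrast_sqr_Scov sum_contrast2_Scov.
by move=> s; rewrite sum_contrast.
Qed.

Lemma Srest_all_le (rho : R) : {in A, forall j, 0 < Scov Y j j} ->
  (forall a, eigenvalue (Sstar_sub Y A) a -> a <= rho) -> Srest_all <= rho * Srest_diag.
Proof.
move=> S_pos le_rho.
have Sstar_sym : (Sstar_sub Y A)^T = Sstar_sub Y A.
  apply/matrixP => i j; rewrite !mxE /Sstar Scov_sym.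
  by rewrite (mulrC (Scov Y (enum_val i) (enum_val i))).
(* At this vector the quadratic form of S* is exactly [Srest_all]. *)
pose x j := (j != q)%:R * Num.sqrt (Scov Y j j).
have sqrt_neq0 l : l \in A -> Num.sqrt (Scov Y l l) != 0.
  by move=> lA; rewrite gt_eqF // sqrtr_gt0 S_pos.
have normE : \sum_(j in A) x j ^+ 2 = Srest_diag.
  rewrite /Srest_diag big_mkcondr /=; apply: eq_bigr => j jA.
  rewrite /x; case: (j != q); last by rewrite mul0r expr0n.
  by rewrite mul1r sqr_sqrtr // ltW // S_pos.
have termE j k : j \in A -> k \in A -> x j * Sstar Y j k * x k =
    if j != q then if k != q then Scov Y j k else 0 else 0.
  move=> jA kA; rewrite /x /Sstar.
  case: (j != q); case: (k != q); rewrite ?mul0r ?mulr0 //.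
  rewrite !mul1r sqrtrM ?ltW ?S_pos //; field.
  by rewrite !sqrt_neq0.
have quadE : \sum_(j in A) \sum_(k in A) x j * Sstar Y j k * x k = Srest_all.
  rewrite /Srest_all big_mkcondr /=; apply: eq_bigr => j jA.
  under eq_bigr => k kA do rewrite termE //.
  by case: (j != q); [rewrite big_mkcondr | rewrite big1].
have := quad_form_le_eigenvalue_bound Sstar_sym le_rho (\row_i x (enum_val i)).
by rewrite enum_quad_form enum_norm_form normE quadE.
Qed.

End Contrast.

Lemma mu_grp_ge0 (R : rcfType) (N : nat) (A : {set 'I_N}) :
  (1 < N)%N -> 0 <= @mu_grp R N A.
Proof.
move=> N_gt1; have N_gt0 : 0 < N%:R :> R by rewrite ltr0n ltnW.
rewrite /mu_grp mulr_ge0 // invr_ge0 ?sqr_ge0 // subr_ge0.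
by rewrite ler_pdivrMr // mul1r ler_nat.
Qed.

Lemma Omega_ge0 (R : rcfType) (N : nat) (Y : 'I_N -> 'I_N -> R)
    (P : {set {set 'I_N}}) (rho : {set 'I_N} -> R) (q : 'I_N) :
  (1 < N)%N -> (forall j, 0 <= Scov Y j j) ->
  0 <= N%:R - rho (pblock P q) - (#|pblock P q|%:R - 1) -> 0 <= Omega Y P rho q.
Proof.
move=> N_gt1 S_ge0 cond5; have N_gt0 : 0 < N%:R :> R by rewrite ltr0n ltnW.
rewrite /Omega /=; set A := pblock P q.
apply: mulr_ge0; last exact: sumr_ge0.
apply: mulr_ge0; first by rewrite mulr_ge0 ?mu_grp_ge0 // invr_ge0 sqr_ge0.
have -> : 1 - rho A / N%:R - (#|A|%:R - 1) / N%:R =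
    (N%:R - rho A - (#|A|%:R - 1)) / N%:R by field; rewrite lt0r_neq0.
by rewrite divr_ge0 // ltW.
Qed.

(* The difference of the two sides equals
   ((m - 1) ((m - 1) S + 2 U + Sig) + (rho Sig - T)) / ((n - 2) (m - 1)^2). *)
Lemma Vhat_bound_algebra (R : rcfType) (n m S U T Sig rho B : R) :
  2 < n -> 2 <= m -> T <= rho * Sig -> 0 <= (m - 1) * S + 2 * U + Sig ->
  S + (1 - 2 / n)^-1 * ((1 - m^-1) ^+ 2)^-1 * (m ^+ 2)^-1
      * (1 - rho / n - (m - 1) / n) * Sig
    + (1 - 2 / n)^-1 * ((1 - m^-1) ^+ 2)^-1 * B ^+ 2 <=
  (1 - 2 / n)^-1 * ((1 - m^-1) ^+ 2)^-1 * (B ^+ 2 + ((1 - m^-1) ^+ 2 * S + Sig / m ^+ 2)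
    - ((1 - m^-1) ^+ 2 * S - 2 * (1 - m^-1) * m^-1 * U + T / m ^+ 2) / n).
Proof.
move=> n_gt2 m_ge2 T_le cross_ge0.
have n_neq0 : n != 0 by apply/eqP; lra.
have m_neq0 : m != 0 by apply/eqP; lra.
have n2_neq0 : n - 2 != 0 by apply/eqP; lra.
have m1_neq0 : m - 1 != 0 by apply/eqP; lra.
rewrite -subr_ge0; set L := _ - _.
have -> : L = (n - 2)^-1 * ((m - 1) ^+ 2)^-1
             * ((m - 1) * ((m - 1) * S + 2 * U + Sig) + (rho * Sig - T)).
  by rewrite /L; field; rewrite m1_neq0 n2_neq0 m_neq0 n_neq0.
rewrite !mulr_ge0 ?invr_ge0 ?sqr_ge0 //; first lra.
by rewrite addr_ge0 ?mulr_ge0 //; lra.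
Qed.

Theorem lemma2 (R : rcfType) (N : nat) (Y : 'I_N -> 'I_N -> R)
  (P : {set {set 'I_N}}) (rho : {set 'I_N} -> R) :
  (2 < N)%N ->
  (forall q : 'I_N, 0 < Scov Y q q) ->
  partition P [set: 'I_N] ->
  (forall A, A \in P -> (2 <= #|A|)%N) ->
  (forall A, A \in P -> largest_eigenvalue (Sstar_sub Y A) (rho A)) ->
  (forall A, A \in P -> Eperm (Yhat_grp Y A) = Ybar_grp Y A) /\
  ((forall A, A \in P -> 0 <= N%:R - rho A - (#|A|%:R - 1)) ->
   forall q : 'I_N,
     0 <= Omega Y P rho q /\
     Eperm (fun s => Vhat Y P s q) >=
       Scov Y q q + Omega Y P rho q
       + @mu_grp R N (pblock P q) * (Ybar Y q - Ybar_grp Y (pblock P q)) ^+ 2).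
Proof.
move=> N_gt2 S_pos P_part P_card P_rho; have N_gt1 := ltnW N_gt2.
split=> [A _ | cond5 q].
  rewrite /Yhat_grp /Ybar_grp EpermZ Eperm_sum.
  by under eq_bigr do rewrite Eperm_obs.
have cover_P : cover P = [set: 'I_N] by case/and3P: P_part => /eqP.
set A := pblock P q.
have qA : q \in A by rewrite mem_pblock cover_P inE.
have AP : A \in P by rewrite pblock_mem // cover_P inE.
split; first by apply: Omega_ge0 => // [j|]; [apply: ltW | apply: cond5].
rewrite /Vhat -/A EpermZ Eperm_contrast_sqr // /Omega -/A /mu_grp.
apply: Vhat_bound_algebra.
- by rewrite ltr_nat.
- by rewrite ler_nat P_card.
- by apply: Srest_all_le => [j _|]; [apply: S_pos | case: (P_rho A AP)].
- exact: Srest_cross_ge0.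
Qed.
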